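(* Under the standing assumptions below, let $\eta>0$. If $x$ is sufficiently large (in terms of $\epsilon$ and $\eta$), then for every residue class $a\bmod 36$ with $2a\not\in Q$ (modulo $36$) we have $\delta_a\leq 0.04+\eta$.
   Context: Standing assumptions and notation: $\epsilon>0$ is fixed, $\delta_0=\frac14-\frac{2}{\pi^2}$, and $A\subseteq[1,x]\cap\mathbb{N}$ is a set with $|A|>(\delta_0+\epsilon)x$ such that $A+A=\{a+b:a,b\in A\}$ contains no squarefree integer, and $A$ is not a subset of $4\mathbb{N}$, nor of $9\mathbb{N}$, nor of $\{n\in\mathbb{N}:n\equiv 2\pmod 4\}$. For $a\in\{0,\dots,35\}$ put $\delta_a=\frac{36\cdot\#\{n\in A: n\equiv a\pmod{36}\}}{x}$. Let $U$ be the set of residues $a\bmod 36$ with $\delta_a>1-\frac{9}{\pi^2}+\epsilon/100$, let $V$ be the set of residues $a\bmod 36$ with $\delta_a>0$, and let $Q=\{0,4,8,9,12,16,18,20,24,27,28,32\}$ (the residue classes mod $36$ containing no squarefree integers). *)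

From Stdlib Require Import Reals Lra Lia Arith List.
Import ListNotations.
Open Scope R_scope.

Definition delta0 : R := / 4 - 2 / (PI ^ 2).

Definition squarefree (n : nat) : Prop :=
  n <> 0%nat /\ forall d : nat, (2 <= d)%nat -> ~ Nat.divide (d * d) n.

(* Q = residue classes mod 36 containing no squarefree integer *)
Definition Qres : list nat := [0; 4; 8; 9; 12; 16; 18; 20; 24; 27; 28; 32]%nat.

Definition count_class (A : list nat) (a : nat) : nat :=
  length (filter (fun n => Nat.eqb (n mod 36) a) A).

Definition delta_res (A : list nat) (x : R) (a : nat) : R :=
  36 * INR (count_class A a) / x.

Definition standing (eps x : R) (A : list nat) : Prop :=
  NoDup A /\
  (forall n, In n A -> (1 <= n)%nat /\ INR n <= x) /\
  INR (length A) > (delta0 + eps) * x /\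
  (forall m n, In m A -> In n A -> ~ squarefree (m + n)) /\
  (exists n, In n A /\ (n mod 4 <> 0)%nat) /\
  (exists n, In n A /\ (n mod 9 <> 0)%nat) /\
  (exists n, In n A /\ (n mod 4 <> 2)%nat).

From Stdlib Require Import Reals Lra Lia ZArith Znumtheory Arith List Classical.
Import ListNotations.
Open Scope R_scope.

(* Let B be the elements of A in the class a mod 36. For b1, b2 in B the sum b1 + b2 lies in
   the class 2a, hence is divisible neither by 4 nor by 9; being non-squarefree, it is divisible
   by d^2 for some d >= 2 prime to 6. If B consists of multiples of 25 (or of 49), it lies in a
   single class mod 900 (or 1764) and is small. Otherwise fix w1, w2 in B with 25 not dividing
   w1 and 49 not dividing w2, and split B into the multiples of 25, the remaining multiples of
   49, and the rest. Shifting the first part by w1 puts it in one class mod 900 with square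
   divisors d^2 for d prime to 30; shifting the second by w2 puts it in one class mod 1764
   with d prime to 42; doubling the third puts it in one class mod 72 with d prime to 210.
   Among the integers up to Y in one class mod M, at most Y/(M d^2) + 1 are divisible by d^2
   (d prime to M), and none once d > sqrt Y. Together with numerical bounds for sum 1/d^2
   over these d, this gives |B| <= x/900 + O(sqrt x), i.e. delta_a <= 0.04 + O(x^(-1/2)). *)

Fixpoint rsum (f : nat -> R) (l : list nat) : R :=
  match l with nil => 0 | d :: l' => f d + rsum f l' end.

Lemma rsum_nonneg f l : (forall d, In d l -> 0 <= f d) -> 0 <= rsum f l.
Proof.
  induction l as [|d l IH]; simpl; intros H; [lra|].
  pose proof (H d (or_introl eq_refl)). pose proof (IH (fun e He => H e (or_intror He))). lra.
Qed.

Lemma rsum_le f g l : (forall d, In d l -> f d <= g d) -> rsum f l <= rsum g l.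
Proof.
  induction l as [|d l IH]; simpl; intros H; [lra|].
  pose proof (H d (or_introl eq_refl)). pose proof (IH (fun e He => H e (or_intror He))). lra.
Qed.

Lemma rsum_plus f g l : rsum (fun d => f d + g d) l = rsum f l + rsum g l.
Proof. induction l; simpl; lra. Qed.

Lemma rsum_scal c f l : rsum (fun d => c * f d) l = c * rsum f l.
Proof. induction l as [|d l IH]; simpl; [ring|]. rewrite IH. ring. Qed.

Lemma rsum_app f l1 l2 : rsum f (l1 ++ l2) = rsum f l1 + rsum f l2.
Proof. induction l1 as [|d l IH]; simpl; [ring|]. rewrite IH. ring. Qed.

Lemma rsum_term_le f l d : (forall e, In e l -> 0 <= f e) -> In d l -> f d <= rsum f l.
Proof.
  intros Hf Hd. induction l as [|e l IH]; simpl in *; [contradiction|].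
  pose proof (Hf e (or_introl eq_refl)).
  pose proof (rsum_nonneg f l (fun e He => Hf e (or_intror He))).
  destruct Hd as [<-|Hd]; [lra|].
  pose proof (IH (fun e He => Hf e (or_intror He)) Hd). lra.
Qed.

Lemma length_NoDup_le (l : list nat) (T : R) :
  0 <= T -> NoDup l -> (forall n, In n l -> INR n <= T) -> INR (length l) <= T + 1.
Proof.
  intros HT Hl Hb. destruct (archimed T) as [Hup Hup1].
  assert (Hup0 : (0 <= up T)%Z) by (apply le_IZR; lra).
  assert (Hincl : incl l (seq 0 (Z.to_nat (up T)))).
  { intros n Hn. apply in_seq. split; [lia|].
    assert (Hn' : (Z.of_nat n < up T)%Z).
    { apply lt_IZR. rewrite <- INR_IZR_INZ. specialize (Hb n Hn). lra. }
    lia. }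
  pose proof (NoDup_incl_length Hl Hincl) as Hlen. rewrite length_seq in Hlen.
  apply le_INR in Hlen. rewrite (INR_IZR_INZ (Z.to_nat _)), Z2Nat.id in Hlen by exact Hup0. lra.
Qed.

Lemma Z_of_nat_divide (a b : nat) : Nat.divide a b -> (Z.of_nat a | Z.of_nat b)%Z.
Proof. intros [c ->]. exists (Z.of_nat c). apply Nat2Z.inj_mul. Qed.

Definition pairwise_congruent (K : nat) (l : list nat) : Prop :=
  ForallPairs (fun m n => (Z.of_nat K | Z.of_nat m - Z.of_nat n)%Z) l.

Lemma pairwise_congruent_of_mod (K r : nat) (l : list nat) :
  (forall n, In n l -> n mod K = r)%nat -> pairwise_congruent K l.
Proof.
  intros Hr m n Hm Hn. exists (Z.of_nat (m / K) - Z.of_nat (n / K))%Z.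
  pose proof (Nat.div_mod_eq m K). pose proof (Nat.div_mod_eq n K).
  pose proof (Hr m Hm). pose proof (Hr n Hn). lia.
Qed.

Lemma pairwise_congruent_incl (K : nat) (l l' : list nat) :
  incl l' l -> pairwise_congruent K l -> pairwise_congruent K l'.
Proof. intros Hi Hl m n Hm Hn. apply Hl; auto. Qed.

Lemma pairwise_congruent_mul (M P : nat) (l : list nat) :
  rel_prime (Z.of_nat M) (Z.of_nat P) ->
  pairwise_congruent M l -> pairwise_congruent P l -> pairwise_congruent (M * P) l.
Proof.
  intros Hr HM HP m n Hm Hn. destruct (HM m n Hm Hn) as [k Hk].
  assert (HPk : (Z.of_nat P | k)%Z).
  { apply Gauss with (Z.of_nat M); [rewrite Z.mul_comm, <- Hk; auto|]. apply rel_prime_sym, Hr. }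
  destruct HPk as [j Hj]. exists j. rewrite Nat2Z.inj_mul, Hk, Hj. ring.
Qed.

Lemma pairwise_congruent_map_add (K w : nat) (l : list nat) :
  pairwise_congruent K l -> pairwise_congruent K (map (Nat.add w) l).
Proof.
  intros Hl m n Hm Hn. apply in_map_iff in Hm as [m' [<- Hm]], Hn as [n' [<- Hn]].
  replace (Z.of_nat (w + m') - Z.of_nat (w + n'))%Z with (Z.of_nat m' - Z.of_nat n')%Z by lia.
  auto.
Qed.

Lemma pairwise_congruent_map_double (K : nat) (l : list nat) :
  pairwise_congruent K l -> pairwise_congruent (2 * K) (map (Nat.mul 2) l).
Proof.
  intros Hl m n Hm Hn. apply in_map_iff in Hm as [m' [<- Hm]], Hn as [n' [<- Hn]].
  destruct (Hl m' n' Hm Hn) as [k Hk]. exists k. lia.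
Qed.

Lemma length_pairwise_congruent_le (K : nat) (l : list nat) (Y : R) :
  (0 < K)%nat -> 0 <= Y -> NoDup l -> (forall n, In n l -> INR n <= Y) ->
  pairwise_congruent K l -> INR (length l) <= Y / INR K + 1.
Proof.
  intros HK HY Hl Hb Hc.
  assert (HKr : 0 < INR K) by (apply lt_0_INR; lia).
  rewrite <- (length_map (fun n => n / K)%nat).
  apply length_NoDup_le.
  - unfold Rdiv. apply Rmult_le_pos; [lra|apply Rlt_le, Rinv_0_lt_compat; lra].
  - apply NoDup_map_NoDup_ForallPairs; auto.
    intros m n Hm Hn Hq. destruct (Hc m n Hm Hn) as [k Hk].
    pose proof (Nat.div_mod_eq m K). pose proof (Nat.div_mod_eq n K).
    pose proof (Nat.mod_upper_bound m K ltac:(lia)).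
    pose proof (Nat.mod_upper_bound n K ltac:(lia)).
    assert (k = 0%Z) by nia. lia.
  - intros q Hq. apply in_map_iff in Hq as [n [<- Hn]].
    pose proof (Nat.Div0.mul_div_le n K) as Hdiv. apply le_INR in Hdiv. rewrite mult_INR in Hdiv.
    specialize (Hb n Hn). apply (Rmult_le_reg_l (INR K)); auto.
    field_simplify; lra.
Qed.

Definition square_multiple_b (d n : nat) : bool := (n mod (d * d) =? 0)%nat.

Lemma square_multiple_bP (d n : nat) : square_multiple_b d n = true <-> Nat.divide (d * d) n.
Proof. unfold square_multiple_b. rewrite Nat.eqb_eq. apply Nat.Lcm0.mod_divide. Qed.

Lemma length_le_rsum_square_multiples (G : nat -> bool) (D T : list nat) :
  (forall n, In n T -> exists d, In d D /\ G d = true /\ square_multiple_b d n = true) ->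
  INR (length T) <=
  rsum (fun d => if G d then INR (length (filter (square_multiple_b d) T)) else 0) D.
Proof.
  induction T as [|n T IH]; intros HT.
  - simpl. apply rsum_nonneg. intros d _. destruct (G d); simpl; lra.
  - pose proof (IH (fun m Hm => HT m (or_intror Hm))) as HT'.
    destruct (HT n (or_introl eq_refl)) as [d0 [Hd0 [Gd0 Md0]]].
    set (hit := fun d => if andb (G d) (square_multiple_b d n) then 1 else 0).
    assert (Hhit : 1 <= rsum hit D).
    { replace 1 with (hit d0) by (unfold hit; rewrite Gd0, Md0; reflexivity).
      apply rsum_term_le; auto. intros e _. unfold hit. destruct (andb _ _); lra. }
    apply Rle_trans with (rsum (fun d => hit d +
      (if G d then INR (length (filter (square_multiple_b d) T)) else 0)) D).
    + rewrite rsum_plus. cbn [length]. rewrite S_INR. lra.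
    + apply rsum_le. intros d _. unfold hit. cbn [filter].
      destruct (G d), (square_multiple_b d n); cbn [andb length]; rewrite ?S_INR; lra.
Qed.

Lemma rsum_indicator_le (s : R) (L k : nat) : 0 <= s ->
  rsum (fun d => if Rle_dec (INR d) s then 1 else 0) (seq k L) <= Rmax 0 (s - INR k + 1).
Proof.
  intros Hs. revert k. induction L as [|L IH]; intros k; simpl.
  - apply Rmax_l.
  - specialize (IH (S k)). rewrite S_INR in IH.
    destruct (Rle_dec (INR k) s).
    + rewrite Rmax_right in IH by lra. rewrite Rmax_right by lra. lra.
    + rewrite Rmax_left in IH by lra. pose proof (Rmax_l 0 (s - INR k + 1)). lra.
Qed.

Definition inv_square_on (G : nat -> bool) (d : nat) : R :=
  if G d then / (INR d * INR d) else 0.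

Section Sieve.

Variables (M : nat) (Y : R) (S : list nat).
Hypothesis M_pos : (0 < M)%nat.
Hypothesis Y_nonneg : 0 <= Y.
Hypothesis S_nodup : NoDup S.
Hypothesis S_range : forall n, In n S -> (1 <= n)%nat /\ INR n <= Y.
Hypothesis S_congruent : pairwise_congruent M S.

(* Only the [d <= sqrt Y] have multiples in [S]: this produces the error term [sqrt Y]. *)
Lemma length_square_multiples_le (d : nat) :
  (2 <= d)%nat -> rel_prime (Z.of_nat M) (Z.of_nat (d * d)) ->
  INR (length (filter (square_multiple_b d) S)) <=
  Y / INR M * / (INR d * INR d) + (if Rle_dec (INR d) (sqrt Y) then 1 else 0).
Proof.
  intros Hd Hrel.
  assert (HMr : 0 < INR M) by (apply lt_0_INR; lia).
  assert (Hdr : 2 <= INR d) by (apply (le_INR 2) in Hd; simpl in Hd; lra).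
  set (F := filter (square_multiple_b d) S).
  assert (HF : forall n, In n F -> In n S /\ Nat.divide (d * d) n).
  { intros n Hn. apply filter_In in Hn as [Hn Hdn]. split; [|apply square_multiple_bP]; auto. }
  destruct (Rle_dec (INR d) (sqrt Y)) as [Hsmall|Hbig].
  2:{ destruct F as [|n0 F0] eqn:EF.
      - simpl. apply Rplus_le_le_0_compat; [|lra].
        apply Rmult_le_pos; [apply Rmult_le_pos; [lra|apply Rlt_le, Rinv_0_lt_compat; lra]|].
        apply Rlt_le, Rinv_0_lt_compat; nra.
      - exfalso. apply Hbig. destruct (HF n0) as [Hn0 [c Hc]]; [left; auto|].
        destruct (S_range n0 Hn0) as [H1 H2].
        assert (Hdn : INR (d * d) <= INR n0) by (apply le_INR; destruct c; nia).
        rewrite mult_INR in Hdn. rewrite <- (sqrt_square (INR d)) by lra.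
        apply sqrt_le_1; nra. }
  replace (Y / INR M * / (INR d * INR d)) with (Y / INR (M * (d * d)))
    by (rewrite !mult_INR; field; nra).
  apply length_pairwise_congruent_le.
  - nia.
  - exact Y_nonneg.
  - apply NoDup_filter, S_nodup.
  - intros n Hn. apply S_range, HF, Hn.
  - apply pairwise_congruent_mul; auto.
    + apply (pairwise_congruent_incl _ S); auto. intros n Hn. apply HF, Hn.
    + intros m n Hm Hn. apply HF in Hm as [_ Hm], Hn as [_ Hn].
      apply Z.divide_sub_r; apply Z_of_nat_divide; auto.
Qed.

Lemma length_le_sieve (G : nat -> bool) (C : R) :
  (forall d, G d = true -> rel_prime (Z.of_nat M) (Z.of_nat (d * d))) ->
  (forall n, In n S -> exists d, (2 <= d)%nat /\ G d = true /\ Nat.divide (d * d) n) ->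
  (forall L, rsum (inv_square_on G) (seq 2 L) <= C) ->
  INR (length S) <= Y / INR M * C + sqrt Y.
Proof.
  intros HG Hdiv HC.
  set (L := list_max S).
  assert (HL : forall n, In n S -> (n <= L)%nat) by apply Forall_forall, list_max_le, Nat.le_refl.
  assert (HMr : 0 < INR M) by (apply lt_0_INR; lia).
  eapply Rle_trans.
  { apply (length_le_rsum_square_multiples G (seq 2 L)).
    intros n Hn. destruct (Hdiv n Hn) as [d [Hd [Gd [c Hc]]]].
    exists d. split; [|split; [exact Gd|apply square_multiple_bP; exists c; exact Hc]].
    apply in_seq. pose proof (HL n Hn). destruct (S_range n Hn). destruct c; nia. }
  apply Rle_trans with (rsum (fun d => Y / INR M * inv_square_on G d +
    (if Rle_dec (INR d) (sqrt Y) then 1 else 0)) (seq 2 L)).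
  - apply rsum_le. intros d Hd. apply in_seq in Hd.
    unfold inv_square_on. destruct (G d) eqn:Gd.
    + apply length_square_multiples_le; [lia|]. apply HG, Gd.
    + rewrite Rmult_0_r. destruct Rle_dec; lra.
  - rewrite rsum_plus, rsum_scal. apply Rplus_le_compat.
    + apply Rmult_le_compat_l; [|apply HC].
      unfold Rdiv. apply Rmult_le_pos; [lra|apply Rlt_le, Rinv_0_lt_compat; lra].
    + eapply Rle_trans; [apply rsum_indicator_le, sqrt_pos|].
      apply Rmax_lub; [apply sqrt_pos|simpl; lra].
Qed.

End Sieve.

Lemma rsum_inv_square_tail (m k : nat) : (1 <= k)%nat ->
  rsum (fun d => / (INR d * INR d)) (seq (S k) m) <= / INR k - / INR (k + m).
Proof.
  revert k. induction m as [|m IH]; intros k Hk; cbn [seq rsum].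
  - rewrite Nat.add_0_r. lra.
  - specialize (IH (S k) ltac:(lia)). replace (S k + m)%nat with (k + S m)%nat in IH by lia.
    assert (Hk1 : 1 <= INR k) by (apply (le_INR 1) in Hk; simpl in Hk; lra).
    rewrite S_INR in *.
    assert (/ ((INR k + 1) * (INR k + 1)) <= / INR k - / (INR k + 1)).
    { replace (/ INR k - / (INR k + 1)) with (/ (INR k * (INR k + 1))) by (field; lra).
      apply Rinv_le_contravar; nra. }
    lra.
Qed.

Lemma inv_square_on_nonneg (G : nat -> bool) (d : nat) : (1 <= d)%nat -> 0 <= inv_square_on G d.
Proof.
  intros Hd. unfold inv_square_on. destruct (G d); [|lra].
  apply (le_INR 1) in Hd. simpl in Hd. apply Rlt_le, Rinv_0_lt_compat; nra.
Qed.

Lemma inv_square_on_le (G : nat -> bool) (d : nat) : (1 <= d)%nat ->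
  inv_square_on G d <= / (INR d * INR d).
Proof.
  intros Hd. pose proof (inv_square_on_nonneg (fun _ => true) d Hd) as H.
  unfold inv_square_on in *. destruct (G d); lra.
Qed.

(* Integer upper bound for [B * rsum (inv_square_on G) l], suitable for [vm_compute]. *)
Fixpoint scaled_inv_square_ceil (G : nat -> bool) (B : Z) (l : list nat) : Z :=
  match l with
  | nil => 0
  | d :: l' => ((if G d then B / (Z.of_nat d * Z.of_nat d) + 1 else 0)
                + scaled_inv_square_ceil G B l')%Z
  end.

Lemma rsum_inv_square_on_le_ceil (G : nat -> bool) (B : Z) (l : list nat) : (0 < B)%Z ->
  (forall d, In d l -> (1 <= d)%nat) ->
  rsum (inv_square_on G) l <= IZR (scaled_inv_square_ceil G B l) / IZR B.
Proof.
  intros HB. induction l as [|d l IH]; intros Hl; simpl.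
  { unfold Rdiv. lra. }
  rewrite plus_IZR. unfold Rdiv in *. rewrite Rmult_plus_distr_r.
  specialize (IH (fun e He => Hl e (or_intror He))).
  enough (inv_square_on G d <=
    IZR (if G d then B / (Z.of_nat d * Z.of_nat d) + 1 else 0) * / IZR B) by lra.
  pose proof (Hl d (or_introl eq_refl)) as Hd.
  unfold inv_square_on. destruct (G d); [|lra].
  set (dd := (Z.of_nat d * Z.of_nat d)%Z).
  assert (Hdd : (0 < dd)%Z) by (unfold dd; nia).
  assert (Hlt : (B < dd * (B / dd + 1))%Z).
  { pose proof (Z.div_mod B dd ltac:(lia)). pose proof (Z.mod_pos_bound B dd Hdd). nia. }
  apply IZR_lt in Hlt. rewrite mult_IZR, plus_IZR in Hlt.
  replace (INR d * INR d) with (IZR dd) by (unfold dd; rewrite mult_IZR, <- INR_IZR_INZ; reflexivity).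
  apply IZR_lt in Hdd. apply IZR_lt in HB. rewrite plus_IZR.
  apply (Rmult_le_reg_l (IZR dd * IZR B)); [nra|].
  field_simplify; lra.
Qed.

(* The first [K] terms are bounded exactly, the rest by the telescoping tail [1/(K+1)]. *)
Lemma rsum_inv_square_on_bound (G : nat -> bool) (B : Z) (K : nat) (C : R) :
  (0 < B)%Z -> (1 <= K)%nat ->
  IZR (scaled_inv_square_ceil G B (seq 2 K)) / IZR B + / INR (S K) <= C ->
  forall L, rsum (inv_square_on G) (seq 2 L) <= C.
Proof.
  intros HB HK HC L.
  assert (Hhead := rsum_inv_square_on_le_ceil G B (seq 2 K) HB
    ltac:(intros d Hd; apply in_seq in Hd; lia)).
  assert (HKp : 0 < / INR (S K)) by (apply Rinv_0_lt_compat, lt_0_INR; lia).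
  destruct (Nat.le_gt_cases L K) as [HL|HL].
  - set (Z_K := scaled_inv_square_ceil G B (seq 2 K)) in *.
    replace K with (L + (K - L))%nat in Hhead by lia. rewrite seq_app, rsum_app in Hhead.
    assert (0 <= rsum (inv_square_on G) (seq (2 + L) (K - L))).
    { apply rsum_nonneg. intros d Hd. apply in_seq in Hd. apply inv_square_on_nonneg. lia. }
    lra.
  - replace L with (K + (L - K))%nat by lia. rewrite seq_app, rsum_app.
    assert (Htail : rsum (inv_square_on G) (seq (2 + K) (L - K)) <= / INR (S K)).
    { eapply Rle_trans.
      { apply (rsum_le _ (fun d => / (INR d * INR d))).
        intros d Hd. apply in_seq in Hd. apply inv_square_on_le. lia. }
      replace (2 + K)%nat with (S (S K)) by lia.
      eapply Rle_trans; [apply rsum_inv_square_tail; lia|].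
      assert (0 < / INR (S K + (L - K))) by (apply Rinv_0_lt_compat, lt_0_INR; lia). lra. }
    lra.
Qed.

Definition avoids (ps : list nat) (d : nat) : bool :=
  forallb (fun p => negb (d mod p =? 0)%nat) ps.

Lemma rsum_avoids_235 L : rsum (inv_square_on (avoids [2; 3; 5]%nat)) (seq 2 L) <= 532 / 10000.
Proof.
  apply (rsum_inv_square_on_bound _ 1000000000 2000); [lia|lia|].
  replace (scaled_inv_square_ceil (avoids [2; 3; 5]%nat) 1000000000 (seq 2 2000)) with 52624913%Z
    by (vm_compute; reflexivity).
  rewrite INR_IZR_INZ. simpl Z.of_nat. lra.
Qed.

Lemma rsum_avoids_237 L : rsum (inv_square_on (avoids [2; 3; 7]%nat)) (seq 2 L) <= 747 / 10000.
Proof.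
  apply (rsum_inv_square_on_bound _ 1000000000 2000); [lia|lia|].
  replace (scaled_inv_square_ceil (avoids [2; 3; 7]%nat) 1000000000 (seq 2 2000)) with 74100236%Z
    by (vm_compute; reflexivity).
  rewrite INR_IZR_INZ. simpl Z.of_nat. lra.
Qed.

Lemma rsum_avoids_2357 L : rsum (inv_square_on (avoids [2; 3; 5; 7]%nat)) (seq 2 L) <= 317 / 10000.
Proof.
  apply (rsum_inv_square_on_bound _ 1000000000 2000); [lia|lia|].
  replace (scaled_inv_square_ceil (avoids [2; 3; 5; 7]%nat) 1000000000 (seq 2 2000)) with 31159118%Z
    by (vm_compute; reflexivity).
  rewrite INR_IZR_INZ. simpl Z.of_nat. lra.
Qed.

Lemma prime_5 : prime 5.
Proof.
  apply prime_intro; [lia|]. intros n Hn. apply Zgcd_1_rel_prime.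
  assert (Hn' : (n = 1 \/ n = 2 \/ n = 3 \/ n = 4)%Z) by lia.
  repeat (destruct Hn' as [->|Hn']; [reflexivity|]). subst. reflexivity.
Qed.

Lemma prime_7 : prime 7.
Proof.
  apply prime_intro; [lia|]. intros n Hn. apply Zgcd_1_rel_prime.
  assert (Hn' : (n = 1 \/ n = 2 \/ n = 3 \/ n = 4 \/ n = 5 \/ n = 6)%Z) by lia.
  repeat (destruct Hn' as [->|Hn']; [reflexivity|]). subst. reflexivity.
Qed.

Lemma avoids_mod (ps : list nat) (d p : nat) : avoids ps d = true -> In p ps -> (d mod p <> 0)%nat.
Proof.
  unfold avoids. rewrite forallb_forall. intros H Hp.
  specialize (H p Hp). apply Bool.negb_true_iff, Nat.eqb_neq in H. exact H.
Qed.

Lemma rel_prime_square_of_avoids (ps qs : list nat) (d : nat) :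
  (forall q, In q qs -> In q ps /\ prime (Z.of_nat q)) -> avoids ps d = true ->
  rel_prime (Z.of_nat (fold_right Nat.mul 1%nat qs)) (Z.of_nat (d * d)).
Proof.
  intros Hqs Hd. induction qs as [|q qs IH]; simpl.
  { apply rel_prime_1. }
  destruct (Hqs q (or_introl eq_refl)) as [Hq Hprime].
  rewrite Nat2Z.inj_mul. apply rel_prime_sym, rel_prime_mult; apply rel_prime_sym.
  - assert (Hqd : ~ (Z.of_nat q | Z.of_nat d)%Z).
    { intros Hqd. apply (avoids_mod ps d q Hd Hq).
      assert (Hq0 : Z.of_nat q <> 0%Z) by (intros E; rewrite E in Hprime; apply not_prime_0, Hprime).
      apply Z.mod_divide in Hqd; auto. rewrite <- Nat2Z.inj_mod in Hqd. lia. }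
    rewrite Nat2Z.inj_mul. apply rel_prime_mult; apply prime_rel_prime; auto.
  - apply IH. intros q' Hq'. apply Hqs. right. exact Hq'.
Qed.

Lemma rel_prime_36_square (p : nat) : avoids [2; 3]%nat p = true ->
  rel_prime (Z.of_nat 36) (Z.of_nat (p * p)).
Proof.
  apply (rel_prime_square_of_avoids _ [2; 2; 3; 3]%nat).
  intros q Hq. simpl in Hq. repeat destruct Hq as [<-|Hq];
    try contradiction; simpl; auto using prime_2, prime_3.
Qed.

Lemma square_divisor_avoiding (ps : list nat) (n : nat) : n <> 0%nat -> ~ squarefree n ->
  (forall p, In p ps -> (0 < p)%nat /\ (n mod (p * p) <> 0)%nat) ->
  exists d, (2 <= d)%nat /\ avoids ps d = true /\ Nat.divide (d * d) n.
Proof.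
  intros Hn Hsq Hps.
  assert (Hd : exists d, (2 <= d)%nat /\ Nat.divide (d * d) n).
  { apply NNPP. intros Hno. apply Hsq. split; auto. intros d Hd Hdn. apply Hno. eauto. }
  destruct Hd as [d [Hd Hdn]]. exists d. repeat split; auto.
  unfold avoids. apply forallb_forall. intros p Hp. destruct (Hps p Hp) as [Hp0 Hpn].
  apply Bool.negb_true_iff, Nat.eqb_neq. intros Hdp. apply Hpn, Nat.Lcm0.mod_divide.
  apply Nat.Lcm0.mod_divide in Hdp as [k ->].
  eapply Nat.divide_trans; [|exact Hdn]. exists (k * k)%nat. ring.
Qed.

Lemma mod_mod_of_divide (k m n : nat) : Nat.divide k m -> ((n mod m) mod k = n mod k)%nat.
Proof.
  intros [c ->]. rewrite (Nat.div_mod_eq n (c * k)) at 2.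
  replace (c * k * (n / (c * k)) + n mod (c * k))%nat
    with (n mod (c * k) + (c * (n / (c * k))) * k)%nat by ring.
  symmetry. apply Nat.Div0.mod_add.
Qed.

Lemma mod_double_eq0 (p b : nat) : Nat.gcd p 2 = 1%nat -> ((2 * b) mod p = 0 -> b mod p = 0)%nat.
Proof.
  intros Hp H. apply Nat.Lcm0.mod_divide in H. apply Nat.Lcm0.mod_divide.
  apply (Nat.gauss p 2); auto.
Qed.

Lemma not_in_Qres_mod (r : nat) : (r < 36)%nat -> ~ In r Qres ->
  (r mod 4 <> 0 /\ r mod 9 <> 0)%nat.
Proof.
  intros Hr HQ.
  do 36 (destruct r as [|r];
    [try (exfalso; apply HQ; simpl; tauto); split; simpl; discriminate|]).
  lia.
Qed.

Lemma sum_mod_4_9 (a b1 b2 : nat) : (b1 mod 36 = a)%nat -> (b2 mod 36 = a)%nat ->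
  ~ In ((2 * a) mod 36)%nat Qres -> ((b1 + b2) mod 4 <> 0 /\ (b1 + b2) mod 9 <> 0)%nat.
Proof.
  intros H1 H2 HQ.
  assert (Hsum : ((b1 + b2) mod 36 = (2 * a) mod 36)%nat).
  { rewrite Nat.Div0.add_mod, H1, H2. f_equal. lia. }
  rewrite <- (mod_mod_of_divide 4 36), <- (mod_mod_of_divide 9 36), Hsum.
  - apply not_in_Qres_mod; [apply Nat.mod_upper_bound; lia|exact HQ].
  - exists 4%nat. reflexivity.
  - exists 9%nat. reflexivity.
Qed.

Section Residue_class.

Variables (x : R) (B : list nat).
Hypothesis x_nonneg : 0 <= x.
Hypothesis B_nodup : NoDup B.
Hypothesis B_range : forall b, In b B -> (1 <= b)%nat /\ INR b <= x.
Hypothesis B_congruent : pairwise_congruent 36 B.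
Hypothesis B_sums : forall b1 b2, In b1 B -> In b2 B ->
  ~ squarefree (b1 + b2) /\ ((b1 + b2) mod 4 <> 0)%nat /\ ((b1 + b2) mod 9 <> 0)%nat.

Lemma sum_square_divisor (qs : list nat) (b1 b2 : nat) : In b1 B -> In b2 B ->
  (forall q, In q qs -> (0 < q)%nat /\ ((b1 + b2) mod (q * q) <> 0)%nat) ->
  exists d, (2 <= d)%nat /\ avoids (2 :: 3 :: qs)%nat d = true /\ Nat.divide (d * d) (b1 + b2).
Proof.
  intros H1 H2 Hqs. destruct (B_range b1 H1) as [Hb1 _].
  destruct (B_sums b1 b2 H1 H2) as [Hsq [H4 H9]].
  apply square_divisor_avoiding; [lia|exact Hsq|].
  intros p [<-|[<-|Hp]]; auto; lia.
Qed.

Lemma length_multiples_le (p : nat) : avoids [2; 3]%nat p = true ->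
  (forall b, In b B -> (b mod (p * p) = 0)%nat) -> INR (length B) <= x / INR (36 * (p * p)) + 1.
Proof.
  intros Hp HB. assert (Hp0 : p <> 0%nat) by (intros ->; discriminate).
  apply length_pairwise_congruent_le; auto.
  - nia.
  - intros b Hb. apply B_range, Hb.
  - apply pairwise_congruent_mul; auto using rel_prime_36_square.
    apply (pairwise_congruent_of_mod _ 0), HB.
Qed.

Lemma length_shifted_le (p : nat) (C : R) :
  prime (Z.of_nat p) -> avoids [2; 3]%nat p = true ->
  (forall L, rsum (inv_square_on (avoids [2; 3; p]%nat)) (seq 2 L) <= C) ->
  forall w S, In w B -> (w mod (p * p) <> 0)%nat -> incl S B -> NoDup S ->
  (forall b, In b S -> (b mod (p * p) = 0)%nat) ->
  INR (length S) <= 2 * x / INR (36 * (p * p)) * C + sqrt (2 * x).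
Proof.
  intros Hprime Hp HC w S Hw Hwp HSB HS HSp.
  assert (Hp0 : p <> 0%nat) by (intros ->; discriminate).
  rewrite <- (length_map (Nat.add w)).
  apply length_le_sieve with (G := avoids [2; 3; p]%nat); auto.
  - nia.
  - lra.
  - apply NoDup_map_NoDup_ForallPairs; auto. intros m n _ _. lia.
  - intros n Hn. apply in_map_iff in Hn as [b [<- Hb]].
    destruct (B_range w Hw), (B_range b (HSB b Hb)). rewrite plus_INR. split; [lia|lra].
  - apply pairwise_congruent_map_add, pairwise_congruent_mul; auto using rel_prime_36_square.
    + apply (pairwise_congruent_incl _ B); auto.
    + apply (pairwise_congruent_of_mod _ 0), HSp.
  - intros d Hd. replace (36 * (p * p))%nat with (fold_right Nat.mul 1%nat [2; 2; 3; 3; p; p]%nat)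
      by (simpl; lia).
    apply (rel_prime_square_of_avoids [2; 3; p]%nat); auto.
    intros q Hq. simpl in Hq. repeat destruct Hq as [<-|Hq];
      try contradiction; simpl; auto using prime_2, prime_3.
  - intros n Hn. apply in_map_iff in Hn as [b [<- Hb]].
    apply sum_square_divisor; auto. intros q [<-|[]]. split; [lia|].
    rewrite Nat.Div0.add_mod, (HSp b Hb), Nat.add_0_r, Nat.Div0.mod_mod. exact Hwp.
Qed.

Lemma length_doubled_le (C : R) :
  (forall L, rsum (inv_square_on (avoids [2; 3; 5; 7]%nat)) (seq 2 L) <= C) ->
  forall S, incl S B -> NoDup S ->
  (forall b, In b S -> (b mod 25 <> 0 /\ b mod 49 <> 0)%nat) ->
  INR (length S) <= 2 * x / INR 72 * C + sqrt (2 * x).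
Proof.
  intros HC S HSB HS HS2.
  rewrite <- (length_map (Nat.mul 2)).
  apply length_le_sieve with (G := avoids [2; 3; 5; 7]%nat); auto.
  - lia.
  - lra.
  - apply NoDup_map_NoDup_ForallPairs; auto. intros m n _ _. lia.
  - intros n Hn. apply in_map_iff in Hn as [b [<- Hb]].
    destruct (B_range b (HSB b Hb)). rewrite mult_INR. simpl (INR 2). split; [lia|lra].
  - apply (pairwise_congruent_map_double 36), (pairwise_congruent_incl _ B); auto.
  - intros d Hd. change 72%nat with (fold_right Nat.mul 1%nat [2; 2; 2; 3; 3]%nat).
    apply (rel_prime_square_of_avoids [2; 3; 5; 7]%nat); auto.
    intros q Hq. simpl in Hq. repeat destruct Hq as [<-|Hq];
      try contradiction; simpl; auto using prime_2, prime_3.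
  - intros n Hn. apply in_map_iff in Hn as [b [<- Hb]].
    replace (2 * b)%nat with (b + b)%nat by lia.
    destruct (HS2 b Hb) as [H25 H49].
    apply sum_square_divisor; auto.
    intros q [<-|[<-|[]]]; (split; [lia|]); intros E; [apply H25|apply H49];
      apply mod_double_eq0; try reflexivity; replace (2 * b)%nat with (b + b)%nat by lia; exact E.
Qed.

(* The three sieve constants combine as 2 (0.0532/900 + 0.0747/1764 + 0.0317/72) < 1/900. *)
Lemma residue_class_bound_of_witnesses (w1 w2 : nat) :
  In w1 B -> (w1 mod 25 <> 0)%nat -> In w2 B -> (w2 mod 49 <> 0)%nat ->
  INR (length B) <= x / 900 + 3 * sqrt (2 * x).
Proof.
  intros Hw1 Hw1m Hw2 Hw2m.
  set (m25 := fun b => (b mod 25 =? 0)%nat).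
  set (m49 := fun b => (b mod 49 =? 0)%nat).
  set (B25 := filter m25 B).
  set (B' := filter (fun b => negb (m25 b)) B).
  set (B49 := filter m49 B').
  set (Brest := filter (fun b => negb (m49 b)) B').
  assert (Hlen : length B = (length B25 + length B49 + length Brest)%nat).
  { pose proof (filter_length m25 B) as Hsplit25. pose proof (filter_length m49 B') as Hsplit49.
    fold B25 B' B49 Brest in Hsplit25, Hsplit49. lia. }
  assert (HB' : forall b, In b B' -> In b B /\ (b mod 25 <> 0)%nat).
  { intros b Hb. apply filter_In in Hb as [Hb Hm].
    apply Bool.negb_true_iff, Nat.eqb_neq in Hm. auto. }
  assert (H25 : INR (length B25) <= 2 * x / INR (36 * (5 * 5)) * (532 / 10000) + sqrt (2 * x)).
  { apply (length_shifted_le 5 _ prime_5 eq_refl rsum_avoids_235 w1); auto.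
    - intros b Hb. apply filter_In in Hb. tauto.
    - apply NoDup_filter, B_nodup.
    - intros b Hb. apply filter_In in Hb as [_ Hb]. apply Nat.eqb_eq, Hb. }
  assert (H49 : INR (length B49) <= 2 * x / INR (36 * (7 * 7)) * (747 / 10000) + sqrt (2 * x)).
  { apply (length_shifted_le 7 _ prime_7 eq_refl rsum_avoids_237 w2); auto.
    - intros b Hb. apply filter_In in Hb as [Hb _]. apply HB', Hb.
    - apply NoDup_filter, NoDup_filter, B_nodup.
    - intros b Hb. apply filter_In in Hb as [_ Hb]. apply Nat.eqb_eq, Hb. }
  assert (Hrest : INR (length Brest) <= 2 * x / INR 72 * (317 / 10000) + sqrt (2 * x)).
  { apply (length_doubled_le _ rsum_avoids_2357).
    - intros b Hb. apply filter_In in Hb as [Hb _]. apply HB', Hb.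
    - apply NoDup_filter, NoDup_filter, B_nodup.
    - intros b Hb. apply filter_In in Hb as [Hb Hm]. apply Bool.negb_true_iff, Nat.eqb_neq in Hm.
      split; [apply HB', Hb|exact Hm]. }
  rewrite (INR_IZR_INZ (36 * (5 * 5))) in H25. rewrite (INR_IZR_INZ (36 * (7 * 7))) in H49.
  rewrite (INR_IZR_INZ 72) in Hrest. simpl Z.of_nat in H25, H49, Hrest.
  rewrite Hlen, !plus_INR. lra.
Qed.

Lemma residue_class_bound : INR (length B) <= x / 900 + 3 * sqrt (2 * x) + 1.
Proof.
  pose proof (sqrt_pos (2 * x)) as Hsqrt.
  destruct (classic (exists w, In w B /\ (w mod 25 <> 0)%nat)) as [[w1 [Hw1 Hw1m]]|Hno25].
  2:{ assert (H : INR (length B) <= x / INR (36 * (5 * 5)) + 1).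
      { apply (length_multiples_le 5 eq_refl). intros b Hb.
        destruct (Nat.eq_dec (b mod (5 * 5)) 0); [auto|exfalso; apply Hno25; eauto]. }
      rewrite (INR_IZR_INZ (36 * (5 * 5))) in H. simpl Z.of_nat in H. lra. }
  destruct (classic (exists w, In w B /\ (w mod 49 <> 0)%nat)) as [[w2 [Hw2 Hw2m]]|Hno49].
  2:{ assert (H : INR (length B) <= x / INR (36 * (7 * 7)) + 1).
      { apply (length_multiples_le 7 eq_refl). intros b Hb.
        destruct (Nat.eq_dec (b mod (7 * 7)) 0); [auto|exfalso; apply Hno49; eauto]. }
      rewrite (INR_IZR_INZ (36 * (7 * 7))) in H. simpl Z.of_nat in H. lra. }
  pose proof (residue_class_bound_of_witnesses w1 w2 Hw1 Hw1m Hw2 Hw2m). lra.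
Qed.

End Residue_class.

Lemma error_term_le (eta x : R) : 0 < eta -> 2 * 216 ^ 2 / eta ^ 2 + 72 / eta <= x ->
  36 * (x / 900 + 3 * sqrt (2 * x) + 1) / x <= 4 / 100 + eta.
Proof.
  intros Heta Hx.
  assert (H1 : 0 < 2 * 216 ^ 2 / eta ^ 2) by (apply Rdiv_lt_0_compat; nra).
  assert (H2 : 0 < 72 / eta) by (apply Rdiv_lt_0_compat; lra).
  assert (Hx0 : 0 < x) by lra.
  assert (Hsq : sqrt (2 * x) <= x * eta / 216).
  { assert (2 * 216 ^ 2 <= x * eta ^ 2).
    { apply (Rmult_le_compat_r (eta ^ 2)) in Hx; [|nra].
      replace ((2 * 216 ^ 2 / eta ^ 2 + 72 / eta) * eta ^ 2)
        with (2 * 216 ^ 2 + 72 * eta) in Hx by (field; lra). nra. }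
    rewrite <- (sqrt_square (x * eta / 216)) by nra. apply sqrt_le_1; nra. }
  assert (Hinv : 72 <= x * eta).
  { apply (Rmult_le_compat_r eta) in Hx; [|lra].
    replace ((2 * 216 ^ 2 / eta ^ 2 + 72 / eta) * eta) with (2 * 216 ^ 2 / eta + 72) in Hx
      by (field; lra).
    assert (0 < 2 * 216 ^ 2 / eta) by (apply Rdiv_lt_0_compat; lra). lra. }
  replace (36 * (x / 900 + 3 * sqrt (2 * x) + 1) / x)
    with (4 / 100 + 108 * sqrt (2 * x) / x + 36 / x) by (field; lra).
  assert (108 * sqrt (2 * x) / x <= eta / 2).
  { apply (Rmult_le_reg_r x); auto. field_simplify; lra. }
  assert (36 / x <= eta / 2).
  { apply (Rmult_le_reg_r x); auto. field_simplify; lra. }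
  lra.
Qed.

Theorem lemma5 :
  forall eps eta : R, 0 < eps -> 0 < eta ->
  exists X0 : R, forall (x : R) (A : list nat),
    X0 <= x -> standing eps x A ->
    forall a : nat, (a < 36)%nat ->
      ~ In ((2 * a) mod 36)%nat Qres ->
      delta_res A x a <= 4 / 100 + eta.
Proof.
  intros eps eta _ Heta.
  exists (2 * 216 ^ 2 / eta ^ 2 + 72 / eta).
  intros x A Hx [Hnodup [Hrange [_ [Hsums _]]]] a _ HQ.
  assert (Hx0 : 0 < x).
  { assert (0 < 2 * 216 ^ 2 / eta ^ 2) by (apply Rdiv_lt_0_compat; nra).
    assert (0 < 72 / eta) by (apply Rdiv_lt_0_compat; lra). lra. }
  unfold delta_res, count_class.
  set (B := filter (fun n => (n mod 36 =? a)%nat) A).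
  assert (HB : forall b, In b B -> In b A /\ (b mod 36 = a)%nat).
  { intros b Hb. apply filter_In in Hb as [Hb Ha]. apply Nat.eqb_eq in Ha. auto. }
  assert (Hcount : INR (length B) <= x / 900 + 3 * sqrt (2 * x) + 1).
  { apply residue_class_bound; [lra|apply NoDup_filter, Hnodup| | |].
    - intros b Hb. apply Hrange, HB, Hb.
    - apply (pairwise_congruent_of_mod _ a). intros b Hb. apply HB, Hb.
    - intros b1 b2 H1 H2. destruct (HB b1 H1), (HB b2 H2).
      split; [apply Hsums; auto|]. apply (sum_mod_4_9 a); auto. }
  eapply Rle_trans; [|apply (error_term_le eta x Heta Hx)].
  unfold Rdiv. apply Rmult_le_compat_r; [apply Rlt_le, Rinv_0_lt_compat; lra|lra].
Qed.
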